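(* Let $p\ge1$, $\phi_1,\dots,\phi_p:\mathbb Z\to\mathbb C$, integers $t>s$ and $1\le m\le p$. Then $$\xi^{(m)}_{t,s}=\sum_{j=1}^{p-m+1}\phi_{m+j-1}(s+j)\,\xi_{t,s+j}.$$
   Context: Convention: $\phi_l(t)=0$ for $l>p$. For integers $t>u$ and $1\le m\le p$, $\Phi^{(m)}_{t,u}$ is the $(t-u)\times(t-u)$ lower Hessenberg matrix whose $(i,j)$ entry is: $\phi_{m+i-1}(u+i)$ if $j=1$; $-1$ if $j=i+1$; $\phi_{i-j+1}(u+i)$ if $2\le j\le i$; $0$ if $j>i+1$. For $t\ge u-p+1$: $\xi^{(m)}_{t,u}=\det\Phi^{(m)}_{t,u}$ if $t>u$; $\xi^{(m)}_{t,u}=1$ if $t=u-m+1$; $\xi^{(m)}_{t,u}=0$ if $u-p+1\le t\le u$, $t\ne u-m+1$. The principal determinant is $\xi_{t,u}=\xi^{(1)}_{t,u}$ (so $\xi_{u,u}=1$ and $\xi_{t,u}=0$ for $u-p+1\le t<u$). *)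

From HB Require Import structures.
From mathcomp Require Import all_boot all_order all_algebra.
From mathcomp Require Import complex.
From mathcomp Require Import reals.
Set Implicit Arguments. Unset Strict Implicit. Unset Printing Implicit Defensive.
Import Order.TTheory GRing.Theory Num.Theory.
Local Open Scope ring_scope.

(* Coefficient functions phi_1..phi_p : Z -> C, given as phi : nat -> int -> C
   (only indices 1..p are used).  Convention: phi_l = 0 for l > p
   (and index 0 never occurs, we also set it to 0). *)
Definition phiE (C : nzRingType) (p : nat) (phi : nat -> int -> C) (l : nat) (t : int) : C :=
  if (1 <= l <= p)%N then phi l t else 0.

(* The (n x n) lower Hessenberg matrix Phi^{(m)}_{t,u} with n = t - u,
   written with 0-based indices i, j (the paper's indices are i+1, j+1):
   entry (i+1, j+1) is
     phi_{m+i}(u+i+1)        if j+1 = 1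
     -1                      if j+1 = i+2
     phi_{i-j+1}(u+i+1)      if 2 <= j+1 <= i+1
     0                       if j+1 > i+2. *)
Definition PhiMx (C : nzRingType) (p : nat) (phi : nat -> int -> C) (m n : nat) (u : int)
  : 'M[C]_n :=
  \matrix_(i < n, j < n)
    if (j == 0%N :> nat) then phiE p phi (m + i) (u + (i.+1)%:Z)
    else if (j == i.+1 :> nat) then -1
    else if (j <= i)%N then phiE p phi (i - j).+1 (u + (i.+1)%:Z)
    else 0.

(* xi^{(m)}_{t,u}: det Phi^{(m)}_{t,u} if t > u; 1 if t = u - m + 1;
   0 otherwise (the paper only defines it for t >= u - p + 1, where the
   "otherwise" case is exactly u-p+1 <= t <= u, t <> u-m+1). *)
Definition xi (C : comNzRingType) (p : nat) (phi : nat -> int -> C) (m : nat) (t u : int) : C :=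
  if u < t then \det (PhiMx p phi m `|t - u|%N u)
  else if t == u - m%:Z + 1 then 1 else 0.

From HB Require Import structures.
From mathcomp Require Import all_boot all_order all_algebra.
From mathcomp Require Import complex.
From mathcomp Require Import reals.
From mathcomp Require Import zify.
Import Order.TTheory GRing.Theory Num.Theory.

(* The first row of Phi^(m)_{t,u} is (phi_m(u+1), -1, 0, ..., 0), and both
   minors it selects are again Hessenberg matrices of the same family, shifted
   to u+1: det Phi^(m)_{t,u} = phi_m(u+1) xi_{t,u+1} + det Phi^(m+1)_{t,u+1}.
   Unrolling the second term expands the determinant along its first column.
   The resulting sum runs over 1 <= j <= t-s, while the claimed one runs over
   1 <= j <= p-m+1; both agree with the sum up to the larger bound, because
   phi_l = 0 for l > p and xi_{t,u} = 0 for t < u. *)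

Local Open Scope ring_scope.

Section PhiDeterminant.
Variables (C : comNzRingType) (p : nat) (phi : nat -> int -> C).

Local Notation Phi := (PhiMx p phi).

Lemma PhiMx_row0 m k u (j : 'I_k.+2) :
  Phi m k.+2 u ord0 j =
  if j == 0%N :> nat then phiE p phi m (u + 1)
  else if j == 1%N :> nat then -1 else 0.
Proof. by rewrite mxE addn0; case: j => [[|[|j]] ?]. Qed.

Lemma PhiMx_minor00 m k u :
  row' ord0 (col' ord0 (Phi m k.+2 u)) = Phi 1 k.+1 (u + 1).
Proof.
apply/matrixP => i j; rewrite !mxE /= /bump /= !add1n.
have -> : u + (i.+2)%:Z = u + 1 + (i.+1)%:Z by lia.
case: j => [[|j] ?] /=; first by rewrite subn1.
by rewrite !eqSS ltnS subSS.
Qed.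

Lemma PhiMx_minor01 m k u :
  row' ord0 (col' (lift ord0 ord0) (Phi m k.+2 u)) = Phi m.+1 k.+1 (u + 1).
Proof.
apply/matrixP => i j; rewrite !mxE /= /bump /= add1n.
have -> : u + (i.+2)%:Z = u + 1 + (i.+1)%:Z by lia.
case: j => [[|j] ?] /=; rewrite !add1n; first by rewrite addnS addSn.
by rewrite !eqSS ltnS subSS.
Qed.

Lemma det_PhiMx1 m u : \det (Phi m 1 u) = phiE p phi m (u + 1).
Proof.
by rewrite (expand_det_row _ ord0) big_ord1 /cofactor det_mx00 !mxE /= !addn0 expr0 !mulr1.
Qed.

Lemma det_PhiMxSS m k u :
  \det (Phi m k.+2 u) =
  phiE p phi m (u + 1) * \det (Phi 1 k.+1 (u + 1)) + \det (Phi m.+1 k.+1 (u + 1)).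
Proof.
rewrite (expand_det_row _ ord0) !big_ord_recl big1 ?addr0; last first.
  by move=> j _; rewrite PhiMx_row0 mul0r.
rewrite !PhiMx_row0 /= /cofactor PhiMx_minor00 PhiMx_minor01.
by rewrite /= !add0n expr0 expr1 mul1r !mulN1r opprK.
Qed.

Lemma det_PhiMx_expansion m n u :
  \det (Phi m n.+1 u) =
  \sum_(i < n.+1)
     phiE p phi (m + i) (u + (i.+1)%:Z) * \det (Phi 1 (n - i) (u + (i.+1)%:Z)).
Proof.
elim: n m u => [|n IHn] m u.
  by rewrite det_PhiMx1 big_ord1 det_mx00 mulr1 addn0.
rewrite det_PhiMxSS (IHn m.+1) [RHS]big_ord_recl /= addn0 subn0; congr (_ + _).
apply: eq_bigr => i _; rewrite /bump /= add1n subSS addnS addSn.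
by have -> : u + 1 + (i.+1)%:Z = u + (i.+2)%:Z by lia.
Qed.

Lemma xi_det m t u : u < t -> xi p phi m t u = \det (Phi m `|t - u|%N u).
Proof. by rewrite /xi => ->. Qed.

Lemma xi1_id u : xi p phi 1 u u = 1.
Proof. by rewrite /xi ltxx subrK eqxx. Qed.

Lemma xi1_lt t u : t < u -> xi p phi 1 t u = 0.
Proof. by move=> tu; rewrite /xi ltNge (ltW tu) subrK (lt_eqF tu). Qed.

Lemma xi_expansion m t s : s < t ->
  xi p phi m t s =
  \sum_(1 <= j < `|t - s|%N.+1)
     phiE p phi (m + j - 1) (s + j%:Z) * xi p phi 1 t (s + j%:Z).
Proof.
move=> st; have [k tE] : exists k : nat, t = s + (k.+1)%:Z.
  by exists (`|t - s|%N).-1; lia.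
have tsE : `|t - s|%N = k.+1 by lia.
rewrite xi_det // tsE det_PhiMx_expansion big_add1 big_mkord.
apply: eq_bigr => -[i /= ik] _; congr (_ * _); first by congr phiE; lia.
have [ilt|ieq] := ltnP i k.
  by rewrite xi_det tE; [congr (\det (Phi _ _ _)); lia | lia].
have -> : i = k by lia.
by rewrite subnn det_mx00 tE xi1_id.
Qed.

End PhiDeterminant.

Lemma sum_nat1_widen (V : nmodType) (F : nat -> V) a b : (a <= b)%N ->
  (forall j, (a < j)%N -> F j = 0) ->
  \sum_(1 <= j < a.+1) F j = \sum_(1 <= j < b.+1) F j.
Proof.
move=> ab F0; rewrite [RHS](big_cat_nat _ (n := a.+1)) //=.
rewrite [X in _ = _ + X]big1_seq ?addr0 // => j.
by rewrite mem_index_iota => /andP[_ /andP[/F0]].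
Qed.

Theorem proposition4 (R : realType) (p : nat) (phi : nat -> int -> R[i])
    (t s : int) (m : nat) :
  (1 <= p)%N -> s < t -> (1 <= m <= p)%N ->
  xi p phi m t s =
  \sum_(1 <= j < (p - m + 1).+1)
     phiE p phi (m + j - 1) (s + j%:Z) * xi p phi 1 t (s + j%:Z).
Proof.
move=> _ st /andP[m1 mp].
set F := fun j : nat => phiE p phi (m + j - 1) (s + j%:Z) * xi p phi 1 t (s + j%:Z).
set N := maxn `|t - s|%N (p - m + 1).
have phiE0 j : (p - m + 1 < j)%N -> F j = 0.
  by move=> jp; rewrite /F /phiE ifF ?mul0r //; lia.
have xi0 j : (`|t - s|%N < j)%N -> F j = 0.
  by move=> jt; rewrite /F xi1_lt ?mulr0 //; lia.
rewrite (@sum_nat1_widen _ F _ N _ phiE0) ?leq_maxr //.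
by rewrite xi_expansion // (@sum_nat1_widen _ F _ N _ xi0) ?leq_maxl.
Qed.
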